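(* Let $G$ be a connected graph with $\delta(G)=1$ and girth at least $15$. If $G\in\mathcal U$ and $s$ is a single star support vertex of $G$, then $s$ has at most one neighbor that is not a leaf.
   Context: All graphs are finite and simple. A set $P\subseteq V(G)$ is an open packing if no two distinct vertices of $P$ have a common neighbor; it is maximal if maximal under inclusion among open packings. $\rho^o(G)$ is the maximum size of an open packing and $\rho^o_L(G)$ the minimum size of a maximal open packing; $\mathcal U$ is the class of graphs with $\rho^o_L(G)=\rho^o(G)$. A leaf is a vertex of degree $1$; a support vertex is a vertex adjacent to at least one leaf; $S_G$ is the set of support vertices. A single star support vertex is a support vertex that is an isolated vertex of the induced subgraph $G[S_G]$ (i.e., not adjacent to any other support vertex); a double star support vertex is a support vertex adjacent to another support vertex. The girth is the length of a shortest cycle ($\infty$ if acyclic). *)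

From mathcomp Require Import all_boot.
Set Implicit Arguments. Unset Strict Implicit. Unset Printing Implicit Defensive.

Definition simple_graph (T : finType) (e : rel T) : Prop :=
  symmetric e /\ irreflexive e.

Section Graphs.
Variables (T : finType) (e : rel T).

Definition nbhd (v : T) : {set T} := [set u | e v u].
Definition deg (v : T) : nat := #|nbhd v|.

Definition connected_graph : Prop := forall x y : T, connect e x y.

Definition min_degree_one : Prop :=
  (exists v : T, deg v = 1) /\ (forall v : T, 1 <= deg v).

Definition is_leaf (v : T) : bool := deg v == 1.
Definition is_support (v : T) : bool := [exists u, e v u && is_leaf u].

Definition single_star_support (s : T) : bool :=
  is_support s && [forall u, e s u ==> ~~ is_support u].

Definition is_graph_cycle (p : seq T) : bool :=
  [&& 3 <= size p, uniq p & cycle e p].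

Definition girth_ge (g : nat) : Prop :=
  forall p : seq T, is_graph_cycle p -> g <= size p.

Definition open_packing (P : {set T}) : bool :=
  [forall x in P, forall y in P, (x != y) ==> [disjoint nbhd x & nbhd y]].

Definition maximal_open_packing (P : {set T}) : bool :=
  open_packing P && [forall Q : {set T}, (open_packing Q && (P \subset Q)) ==> (Q == P)].

Definition rho_o : nat := \max_(P : {set T} | open_packing P) #|P|.

(* rho^o_L(G): minimum size of a maximal open packing
   (the empty set is an open packing, so maximal ones exist) *)
Definition rho_o_L : nat :=
  \big[minn/#|T|]_(P : {set T} | maximal_open_packing P) #|P|.

Definition in_class_U : Prop := rho_o_L = rho_o.

End Graphs.

From mathcomp Require Import all_boot zify.

Set Implicit Arguments. Unset Strict Implicit. Unset Printing Implicit Defensive.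

(* Everything rests on an exchange argument (exchange_bound): if J :|: A and
   J :|: B are open packings, B avoids J, and every vertex that B dominates
   (lies in B or shares a neighbour with a member of B) is dominated by A or
   J, then #|B| <= #|A| in U.  Indeed, extend J :|: A to a maximal packing M;
   then (M :\: A) :|: B is a packing, of size #|M| - #|A| + #|B|.  We use it
   with A = [set c] and B = [set y1; y2], y1 and y2 being joined to c by
   "arms" of length two (arm_exchange); J collects one end of each
   non-backtracking walk of length 4 leaving a "deep" vertex, which dominates
   what the arms dominate (deep_witnesses).  Girth 15 keeps all relevant
   vertices pairwise far: the ends of a non-backtracking walk of length 3 to
   12 have no common neighbour (nb_walk_far).  This rules out three
   configurations around s; the first two force every second neighbour w of
   s, reached through u, to be deep away from u (deep_at_root, deep_beyond),
   and then two non-leaf neighbours of s produce the third. *)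

Lemma bigminn_le (I : finType) (P : pred I) (F : I -> nat) (x0 : nat) (i : I) :
  P i -> \big[minn/x0]_(j | P j) F j <= F i.
Proof.
move=> Pi; have : i \in index_enum I := mem_index_enum i.
elim: (index_enum I) => [|j r IH] //; rewrite in_cons big_cons.
case/orP => [/eqP <-|ir]; first by rewrite Pi geq_minl.
by case: (P j); last exact: IH; exact: leq_trans (geq_minr _ _) (IH ir).
Qed.

Section Graph.
Variables (T : finType) (e : rel T).
Hypothesis esym : symmetric e.
Hypothesis eirr : irreflexive e.

Definition far (x y : T) : bool := (x != y) && [disjoint nbhd e x & nbhd e y].

Definition conflict (x y : T) : bool :=
  (x != y) && ~~ [disjoint nbhd e x & nbhd e y].

(* v is dominated by X when it belongs to X or conflicts with a member of X;
   a packing containing X can then not contain v (outside X). *)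
Definition dominated (X : {set T}) (v : T) : Prop :=
  v \in X \/ exists2 a, a \in X & conflict a v.

Lemma nbhd_disjointP (x y : T) :
  reflect (forall m, e x m -> e y m -> False) [disjoint nbhd e x & nbhd e y].
Proof.
apply: (iffP pred0P) => [h m exm eym | h m] /=.
  by move: (h m); rewrite /= !inE exm eym.
by rewrite !inE; apply/negP => /andP [exm eym]; exact: h m exm eym.
Qed.

Lemma conflict_common (x y m : T) : x != y -> e x m -> e y m -> conflict x y.
Proof.
move=> nxy exm eym; rewrite /conflict nxy /=.
by apply/negP => /nbhd_disjointP /(_ m exm eym).
Qed.

Lemma conflict_witness (x y : T) :
  conflict x y -> x != y /\ exists2 m, e x m & e y m.
Proof.
case/andP => nxy /nbhd_disjointP nd; split => //.
case: (boolP [exists m, e x m && e y m]) => [/existsP [m /andP [h1 h2]]|/existsPn H].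
  by exists m.
by exfalso; apply: nd => m exm eym; move: (H m); rewrite exm eym.
Qed.

Lemma far_disjoint (x y : T) : far x y -> [disjoint nbhd e x & nbhd e y].
Proof. by case/andP. Qed.

Lemma leaf_nbr_eq (l a b : T) : is_leaf e l -> e l a -> e l b -> a = b.
Proof.
rewrite /is_leaf /deg => /cards1P [x hx] ha hb.
have : a \in nbhd e l by rewrite inE.
have : b \in nbhd e l by rewrite inE.
by rewrite hx !inE => /eqP -> /eqP ->.
Qed.

Lemma other_neighbour (c z : T) : e c z -> ~~ is_leaf e c -> exists2 d, e c d & d != z.
Proof.
move=> ecz nl; have zin : z \in nbhd e c by rewrite inE.
have : 0 < #|nbhd e c :\ z|.
  move: nl; rewrite /is_leaf /deg (cardsD1 z) zin; lia.
by case/card_gt0P => d; rewrite !inE => /andP [dz ecd]; exists d.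
Qed.

Lemma packingP (P : {set T}) :
  reflect (forall x y, x \in P -> y \in P -> x != y ->
             [disjoint nbhd e x & nbhd e y])
          (open_packing e P).
Proof.
apply: (iffP forall_inP) => [h x y xP yP nxy | h x xP].
  by move: (h x xP) => /forall_inP /(_ y yP) /implyP; apply.
by apply/forall_inP => y yP; apply/implyP; apply: h.
Qed.

Lemma packing_conflict (P : {set T}) (x y : T) :
  open_packing e P -> x \in P -> y \in P -> ~~ conflict x y.
Proof.
move=> /packingP pP xP yP; rewrite /conflict negb_and negbK.
by case: (eqVneq x y) => //= nxy; rewrite pP.
Qed.

Lemma packingU (J X : {set T}) :
  open_packing e J -> open_packing e X ->
  (forall g y, g \in J -> y \in X -> [disjoint nbhd e g & nbhd e y]) ->
  open_packing e (J :|: X).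
Proof.
move=> /packingP pJ /packingP pX hJX; apply/packingP => x y; rewrite !inE.
case/orP => [xJ|xX] /orP [yJ|yX] nxy; first exact: pJ.
- exact: hJX.
- by rewrite disjoint_sym; apply: hJX.
- exact: pX.
Qed.

Lemma packing1 (a : T) : open_packing e [set a].
Proof. by apply/packingP => x y; rewrite !inE => /eqP -> /eqP ->; rewrite eqxx. Qed.

Lemma packing2 (a b : T) : far a b -> open_packing e [set a; b].
Proof.
case/andP=> _ dab; apply/packingP => x y; rewrite !inE.
by case/orP => /eqP -> /orP [] /eqP ->; rewrite ?eqxx // disjoint_sym.
Qed.

Lemma packing_undominated (M X : {set T}) (m : T) :
  open_packing e M -> X \subset M -> m \in M -> m \notin X -> ~ dominated X m.
Proof.
move=> pM sXM mM mX [mX'|[a aX cam]]; first by rewrite mX' in mX.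
by move: (packing_conflict pM (subsetP sXM a aX) mM); rewrite cam.
Qed.

Lemma maximal_extension (P : {set T}) :
  open_packing e P -> exists2 M, maximal_open_packing e M & P \subset M.
Proof.
move=> pP; have P_ok : open_packing e P && (P \subset P) by rewrite pP subxx.
case: (@arg_maxnP _ P (fun Q : {set T} => open_packing e Q && (P \subset Q))
                       (fun Q => #|Q|) P_ok).
move=> M /andP [pM sPM] maxM; exists M => //.
rewrite /maximal_open_packing pM; apply/forallP => Q; apply/implyP.
case/andP => pQ sMQ; rewrite eq_sym eqEcard sMQ /=.
by apply: maxM; rewrite pQ (subset_trans sPM sMQ).
Qed.

Lemma classU_card_le (M N : {set T}) :
  in_class_U e -> maximal_open_packing e M -> open_packing e N -> #|N| <= #|M|.
Proof.
move=> hU mM pN; apply: (@leq_trans (rho_o e)); first exact: leq_bigmax_cond.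
by rewrite -hU; apply: bigminn_le.
Qed.

Lemma exchange_packing (M J A B : {set T}) :
  open_packing e M -> J :|: A \subset M -> open_packing e (J :|: B) ->
  [disjoint B & J] ->
  (forall v, dominated B v -> dominated A v \/ dominated J v) ->
  open_packing e ((M :\: A) :|: B) /\ [disjoint M :\: A & B].
Proof.
move=> pM; rewrite subUset => /andP [sJM sAM] pJB dBJ hdom.
have free m : m \in M -> m \notin A -> m \notin J -> ~ dominated B m.
  move=> mM mA mJ /hdom [].
  - exact: packing_undominated pM sAM mM mA.
  - exact: packing_undominated pM sJM mM mJ.
have dMB : [disjoint M :\: A & B].
  apply/pred0P => x /=; apply/negP; rewrite inE => /andP [/andP [xA xM] xB].
  have xJ : x \notin J by rewrite (disjointFr dBJ xB).
  by apply: (free x xM xA xJ); left.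
split=> //; apply/packingP => x y; rewrite !inE.
have pB x1 y1 : x1 \in J :|: B -> y1 \in J :|: B -> x1 != y1 ->
    [disjoint nbhd e x1 & nbhd e y1] by move/packingP: pJB; apply.
have cross x1 y1 : x1 \in M -> x1 \notin A -> y1 \in B -> x1 != y1 ->
    [disjoint nbhd e x1 & nbhd e y1].
  move=> x1M x1A y1B nxy; case: (boolP (x1 \in J)) => x1J.
    by apply: pB; rewrite // inE ?x1J ?y1B ?orbT.
  apply: contraT => nd; case: (free x1 x1M x1A x1J); right.
  by exists y1 => //; rewrite /conflict eq_sym nxy disjoint_sym.
case/orP => [/andP [xA xM]|xB] /orP [/andP [yA yM]|yB] nxy.
- by move/packingP: pM; apply.
- exact: cross.
- by rewrite disjoint_sym; apply: cross; rewrite // eq_sym.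
- by apply: pB; rewrite // inE ?xB ?yB ?orbT.
Qed.

(* The exchange bound: in the class U such an exchange cannot increase the
   size, since (M :\: A) :|: B is a packing while M is maximal. *)
Lemma exchange_bound (J A B : {set T}) :
  in_class_U e -> open_packing e (J :|: A) -> open_packing e (J :|: B) ->
  [disjoint B & J] ->
  (forall v, dominated B v -> dominated A v \/ dominated J v) ->
  #|B| <= #|A|.
Proof.
move=> hU pJA pJB dBJ hdom.
have [M mM sM] := maximal_extension pJA.
have pM : open_packing e M by case/andP: mM.
have [pN dMB] := exchange_packing pM sM pJB dBJ hdom.
have := classU_card_le hU mM pN.
have sAM : A \subset M by apply: subset_trans sM; apply: subsetUr.
rewrite cardsU (disjoint_setI0 dMB) cards0 subn0 (cardsDS sAM).
have := subset_leq_card sAM; lia.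
Qed.



Definition arm_covered (J : {set T}) (y m0 : T) : Prop :=
  forall m v, e y m -> m != m0 -> e m v -> v != y ->
  exists2 g, g \in J & conflict g v.

Definition far_from (J : {set T}) (x : T) : Prop := forall g, g \in J -> far x g.

Lemma arm_coveredS (J J' : {set T}) (y m0 : T) :
  J \subset J' -> arm_covered J y m0 -> arm_covered J' y m0.
Proof.
move=> sJ cov m v eym nm emv nvy; have [g gJ cgv] := cov m v eym nm emv nvy.
by exists g; first exact: subsetP sJ g gJ.
Qed.

(* An arm towards a pendant-like vertex is covered by anything: all other
   neighbours of z are leaves, so z is their only neighbour. *)
Lemma pendant_arm (J : {set T}) (z x : T) :
  (forall c, e z c -> c != x -> is_leaf e c) -> arm_covered J z x.
Proof.
move=> leaves m v ezm nmx emv nvz; exfalso; move/eqP: nvz; apply.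
by apply: (leaf_nbr_eq (leaves m ezm nmx)); rewrite // esym.
Qed.

Lemma arm_dominated (J : {set T}) (c y m0 v : T) :
  e y m0 -> e m0 c -> arm_covered J y m0 ->
  v = y \/ conflict y v -> dominated [set c] v \/ dominated J v.
Proof.
move=> eym0 em0c cov hv.
have via_m0 w : e w m0 -> dominated [set c] w \/ dominated J w.
  move=> ewm0; left; case: (eqVneq w c) => [->|nwc]; first by left; rewrite inE.
  right; exists c; rewrite ?inE //.
  by apply: (conflict_common (m := m0)); rewrite // 1?eq_sym // esym.
case: hv => [->|/conflict_witness [nyv [m eym evm]]]; first exact: via_m0.
case: (eqVneq m m0) => [mm0|nm]; first by apply: via_m0; rewrite -mm0.
by right; right; apply: (cov m v) => //; rewrite 1?esym // eq_sym.
Qed.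

(* The basic contradiction: two far vertices y1, y2, each joined to a common
   vertex c by a path of length two whose arm is covered by a packing J far
   from c, y1, y2, would let us trade {c} for {y1, y2}. *)
Lemma arm_exchange (J : {set T}) (c y1 y2 m1 m2 : T) :
  in_class_U e -> open_packing e J ->
  far_from J c -> far_from J y1 -> far_from J y2 -> far y1 y2 ->
  e y1 m1 -> e m1 c -> arm_covered J y1 m1 ->
  e y2 m2 -> e m2 c -> arm_covered J y2 m2 -> False.
Proof.
move=> hU pJ fc f1 f2 f12 e1 e1c cov1 e2 e2c cov2.
have compat (X : {set T}) : (forall y, y \in X -> far_from J y) -> open_packing e X ->
    open_packing e (J :|: X).
  move=> fX pX; apply: packingU => // g y gJ yX.
  by rewrite disjoint_sym far_disjoint // fX.
have [ny12 _] := andP f12.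
suff : #|[set y1; y2]| <= #|[set c]| by rewrite cards1 cards2 ny12.
apply: exchange_bound hU _ _ _ _.
- by apply: compat (packing1 c) => y; rewrite inE => /eqP ->.
- by apply: compat (packing2 f12) => y; rewrite !inE => /orP [] /eqP ->.
- apply/pred0P => y /=; apply/negP; rewrite !inE => /andP [/orP [] /eqP -> yJ].
    by move: (f1 y1 yJ); rewrite /far eqxx.
  by move: (f2 y2 yJ); rewrite /far eqxx.
have by_arms y v : y \in [set y1; y2] -> v = y \/ conflict y v ->
    dominated [set c] v \/ dominated J v.
  rewrite !inE => /orP [] /eqP ->.
  - exact: arm_dominated e1 e1c cov1.
  - exact: arm_dominated e2 e2c cov2.
move=> v [vB|[y yB cyv]]; first exact: by_arms vB (or_introl erefl).
exact: by_arms yB (or_intror cyv).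
Qed.

Fixpoint nonbacktracking (s : seq T) : bool :=
  if s is a :: ((_ :: c :: _) as t) then (a != c) && nonbacktracking t else true.

Definition nb_walk (a : T) (p : seq T) : bool := path e a p && nonbacktracking (a :: p).

Lemma nb_walk_behead (a b : T) (p : seq T) : nb_walk a (b :: p) -> nb_walk b p.
Proof. by rewrite /nb_walk /= => /andP [/andP [_ ->]]; case: p => //= c p /andP []. Qed.

Section Walks.
Variable g : nat.
Hypothesis girth : girth_ge e g.

Lemma no_short_cycle (p : seq T) :
  3 <= size p -> size p < g -> uniq p -> cycle e p -> False.
Proof.
move=> p3 pg up cp.
by have := girth (p := p); rewrite /is_graph_cycle p3 up cp leqNgt pg => /(_ isT).
Qed.

Lemma nb_walk_return (a : T) (q : seq T) :
  nb_walk a q -> uniq q -> a \in q -> size q < g -> False.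
Proof.
move=> /andP [pq nbq] uq ain sz.
case/splitPr: ain pq nbq uq sz => p1 p2 pq nbq uq sz.
apply: (@no_short_cycle (a :: p1)).
- move: pq nbq sz; rewrite size_cat /=.
  case: p1 {uq} => [|c [|d p1]] /=; first by rewrite eirr.
    by rewrite eqxx.
  by move=> _ _; lia.
- by move: sz; rewrite size_cat /=; lia.
- move: uq; rewrite cat_uniq /= => /and3P [u1 /norP [na _] _].
  by rewrite u1 andbT; apply: contra na => ain; rewrite ain.
- by move: pq; rewrite /cycle rcons_path cat_path /= => /and3P [-> -> _].
Qed.

Lemma nb_walk_uniq (a : T) (p : seq T) : nb_walk a p -> size p < g -> uniq (a :: p).
Proof.
elim: p a => [|b p IH] a // wp sz.
have ub := IH b (nb_walk_behead wp) (ltnW sz).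
rewrite cons_uniq ub andbT; apply/negP => ain.
exact: (nb_walk_return wp ub ain sz).
Qed.

(* The ends of a non-backtracking walk of length between 3 and g - 3 are
   far: a common neighbour would close a cycle shorter than g. *)
Lemma nb_walk_far (a : T) (p : seq T) :
  nb_walk a p -> 3 <= size p -> size p + 3 <= g -> far a (last a p).
Proof.
move=> wp s3 sg; have up : uniq (a :: p) by apply: nb_walk_uniq wp _; lia.
case/andP: wp => pp _; apply/andP; split.
  move: up s3; case/lastP: p {pp sg} => [|q b] //.
  by rewrite last_rcons cons_uniq mem_rcons in_cons negb_or => /andP [/andP []].
apply/nbhd_disjointP => h eah ebh.
case: (boolP (h \in a :: p)) => [|hap].
  rewrite in_cons => /orP [/eqP ha|hp]; first by move: eah; rewrite ha eirr.
  case/splitPr: hp pp up s3 sg ebh => p1 p2 pp up s3 sg ebh.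
  case: p1 pp up s3 sg ebh => [|c p1] pp up s3 sg ebh.
    (* h is the second vertex: h p2 closes a cycle *)
    apply: (@no_short_cycle (h :: p2)); rewrite ?size_cat /= in s3 sg *; try lia.
      by case/andP: up.
    move: pp => /= /andP [_ pp2]; rewrite /cycle rcons_path pp2 /=.
    by move: ebh; rewrite last_cat /= esym.
  (* otherwise a c .. h is a cycle through the edge h a *)
  apply: (@no_short_cycle (a :: rcons (c :: p1) h)); rewrite ?size_cat /= in s3 sg *;
    rewrite ?size_rcons /=; try lia.
    move: up; rewrite -(cat1s h p2) -cat_cons catA cat_uniq => /andP [+ _].
    by rewrite cats1.
  rewrite /cycle rcons_path last_rcons (esym h a) eah andbT rcons_path.
  by move: pp; rewrite cat_path => /andP [/= /andP [-> ->] /andP [-> _]].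
(* h outside the walk: a p h is a cycle *)
apply: (@no_short_cycle (a :: rcons p h)); rewrite /= ?size_rcons; try lia.
  move: hap up; rewrite in_cons cons_uniq => /norP [nha nhp] /andP [nap up].
  by rewrite rcons_uniq mem_rcons in_cons negb_or nap nhp up eq_sym nha.
by rewrite /cycle !rcons_path pp last_rcons ebh esym eah.
Qed.

End Walks.

Inductive extension (r q g : T) : Prop :=
  Extension (a b f : T) of
    e r a & a != q & e a b & b != r & e b f & f != a & e f g & g != b.

Definition deep (r q : T) : Prop :=
  forall a b, e r a -> a != q -> e a b -> b != r ->
  exists f g, [/\ e b f, f != a, e f g & g != b].

Section Girth15.
Hypothesis girth15 : girth_ge e 15.
Hypothesis hU : in_class_U e.

Lemma far_by_walk (a : T) (p : seq T) :
  nb_walk a p -> 3 <= size p <= 12 -> far a (last a p).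
Proof. by move=> wp /andP [s3 s12]; apply: (nb_walk_far girth15) => //; lia. Qed.

Ltac walk_check := rewrite /nb_walk /=; repeat (apply/andP; split); try done;
  try (by rewrite esym); try (by rewrite eq_sym).

Ltac far_walk a p := exact: (@far_by_walk a p ltac:(walk_check) isT).

Lemma extensions_far (r a1 b1 f1 g1 a2 b2 f2 g2 : T) :
  e r a1 -> e a1 b1 -> b1 != r -> e b1 f1 -> f1 != a1 -> e f1 g1 -> g1 != b1 ->
  e r a2 -> e a2 b2 -> b2 != r -> e b2 f2 -> f2 != a2 -> e f2 g2 -> g2 != b2 ->
  (a1, b1) != (a2, b2) -> far g1 g2.
Proof.
move=> ? ? ? ? ? ? ? ? ? ? ? ? ? ? n12.
case: (eqVneq a1 a2) => [ea|na].
  subst a2; have nb : b1 != b2 by apply: contraNneq n12 => ->.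
  far_walk g1 [:: f1; b1; a1; b2; f2; g2].
case: (eqVneq b1 b2) => [eb|nb].
  (* r a1 b1 a2 r would be a 4-cycle *)
  subst b2; exfalso.
  have := @nb_walk_uniq 15 girth15 r [:: a1; b1; a2; r] ltac:(walk_check) isT.
  by rewrite /= !inE eqxx !orbT.
far_walk g1 [:: f1; b1; a1; r; a2; b2; f2; g2].
Qed.

(* A deep vertex r yields a packing J of extension ends, one for each first
   two steps, covering the arm r -- q. *)
Lemma deep_witnesses (r q : T) : deep r q -> exists J : {set T},
  [/\ open_packing e J, forall g, g \in J -> extension r q g & arm_covered J r q].
Proof.
move=> dr.
pose P := [set p : T * T | [&& e r p.1, p.1 != q, e p.1 p.2 & p.2 != r]].
pose ext (p : T * T) (g : T) := [exists f, [&& e p.2 f, f != p.1, e f g & g != p.2]].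
pose F (p : T * T) := odflt p.2 [pick g | ext p g].
have extF p : p \in P -> exists f, [/\ e p.2 f, f != p.1, e f (F p) & F p != p.2].
  case: p => a b; rewrite inE /= => /and4P [h1 h2 h3 h4]; rewrite /F.
  case: pickP => [g /existsP [f /and4P [k1 k2 k3 k4]]|none] /=; first by exists f.
  have [f [g [k1 k2 k3 k4]]] := dr a b h1 h2 h3 h4.
  by move: (none g) => /existsP []; exists f; rewrite k1 k2 k3 k4.
exists (F @: P); split.
- apply/packingP => _ _ /imsetP [p1 p1P ->] /imsetP [p2 p2P ->] nF.
  have [f1 [k1 k2 k3 k4]] := extF _ p1P; have [f2 [l1 l2 l3 l4]] := extF _ p2P.
  move: p1P p2P; rewrite !inE => /and4P [h1 h2 h3 h4] /and4P [m1 m2 m3 m4].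
  have n12 : (p1.1, p1.2) != (p2.1, p2.2).
    by case: p1 p2 nF {k1 k2 k3 k4 l1 l2 l3 l4 h1 h2 h3 h4 m1 m2 m3 m4} => ? ? [? ?];
      apply: contraNneq => ->.
  exact/far_disjoint/(extensions_far h1 h3 h4 k1 k2 k3 k4 m1 m3 m4 l1 l2 l3 l4 n12).
- move=> _ /imsetP [[a b] abP ->]; have [f [k1 k2 k3 k4]] := extF _ abP.
  move: abP; rewrite inE /= => /and4P [h1 h2 h3 h4].
  exact: (Extension h1 h2 h3 h4 k1 k2 k3 k4).
move=> a b h1 h2 h3 h4; have abP : (a, b) \in P by rewrite inE /= h1 h2 h3 h4.
have [f [k1 k2 k3 k4]] := extF _ abP.
by exists (F (a, b)); [exact: imset_f | apply: (conflict_common (m := f)); rewrite // esym].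
Qed.

(* First configuration: a leaf l of s, a path s u w x with x deep away from
   w.  Trade {u} for {l, x}. *)
Lemma leaf_branch_contra (s l u w x : T) :
  e s l -> is_leaf e l -> e s u -> u != l -> e u w -> w != s -> e w x -> x != u ->
  deep x w -> False.
Proof.
move=> esl ll esu ul euw ws ewx xu dx.
have [J [pJ extJ covJ]] := deep_witnesses dx.
apply: (@arm_exchange J u l x s w hU pJ); rewrite // 1?esym //.
- by move=> g /extJ [a b f *]; far_walk u [:: w; x; a; b; f; g].
- by move=> g /extJ [a b f *]; far_walk l [:: s; u; w; x; a; b; f; g].
- by move=> g /extJ [a b f *]; far_walk x [:: a; b; f; g].
- far_walk l [:: s; u; w; x].
apply: pendant_arm => c elc cs; exfalso; move/eqP: cs; apply.
by apply: (leaf_nbr_eq ll); rewrite // esym.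
Qed.

(* Second configuration: a non-backtracking path s u w x z such that all
   neighbours of z other than x are leaves, with s deep away from u.  Trade
   {w} for {s, z}. *)
Lemma pendant_path_contra (s u w x z : T) :
  e s u -> e u w -> w != s -> e w x -> x != u -> e x z -> z != w ->
  (forall c, e z c -> c != x -> is_leaf e c) -> deep s u -> False.
Proof.
move=> esu euw ws ewx xu exz zw leaves ds.
have [J [pJ extJ covJ]] := deep_witnesses ds.
apply: (@arm_exchange J w s z u x hU pJ); rewrite // 1?esym //.
- by move=> g /extJ [a b f *]; far_walk w [:: u; s; a; b; f; g].
- by move=> g /extJ [a b f *]; far_walk s [:: a; b; f; g].
- by move=> g /extJ [a b f *]; far_walk z [:: x; w; u; s; a; b; f; g].
- far_walk s [:: u; w; x; z].
exact: pendant_arm.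
Qed.

Lemma branch_far (s u w u' w' g : T) :
  e s u -> e s u' -> u != u' -> e u w -> w != s -> e u' w' -> w' != s ->
  extension w u g -> [/\ far s g, far w g & far w' g].
Proof.
move=> esu esu' uu' euw ws eu'w' w's [a b f *]; split.
- far_walk s [:: u; w; a; b; f; g].
- far_walk w [:: a; b; f; g].
- far_walk w' [:: u'; s; u; w; a; b; f; g].
Qed.

(* Third configuration: two branches s u1 w1 and s u2 w2 with each w_i deep
   away from u_i.  Trade {s} for {w1, w2}. *)
Lemma two_branches_contra (s u1 u2 w1 w2 : T) :
  e s u1 -> e s u2 -> u1 != u2 -> e u1 w1 -> w1 != s -> e u2 w2 -> w2 != s ->
  deep w1 u1 -> deep w2 u2 -> False.
Proof.
move=> esu1 esu2 u12 euw1 w1s euw2 w2s d1 d2.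
have [J1 [pJ1 ext1 cov1]] := deep_witnesses d1.
have [J2 [pJ2 ext2 cov2]] := deep_witnesses d2.
have u21 : u2 != u1 by rewrite eq_sym.
have far1 g : g \in J1 -> _ := fun gJ => branch_far esu1 esu2 u12 euw1 w1s euw2 w2s (ext1 g gJ).
have far2 g : g \in J2 -> _ := fun gJ => branch_far esu2 esu1 u21 euw2 w2s euw1 w1s (ext2 g gJ).
have pJ : open_packing e (J1 :|: J2).
  apply: packingU => // g h gJ1 hJ2.
  case: (ext1 g gJ1) (ext2 h hJ2) => a b f ? ? ? ? ? ? ? ? [a' b' f' *].
  apply: far_disjoint; far_walk g [:: f; b; a; w1; u1; s; u2; w2; a'; b'; f'; h].
apply: (@arm_exchange (J1 :|: J2) s w1 w2 u1 u2 hU pJ); rewrite // 1?esym //.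
- by move=> g; rewrite inE => /orP [/far1 [] | /far2 []].
- by move=> g; rewrite inE => /orP [/far1 [] | /far2 []].
- by move=> g; rewrite inE => /orP [/far1 [] | /far2 []].
- far_walk w1 [:: u1; s; u2; w2].
- exact: arm_coveredS (subsetUl J1 J2) cov1.
- exact: arm_coveredS (subsetUr J1 J2) cov2.
Qed.

(* If s has a leaf l and no neighbour of s supports a leaf, s is deep away
   from each neighbour: a walk s a b f that cannot be continued beyond f gives
   the first configuration, f being (vacuously) deep away from b. *)
Lemma deep_at_root (s l : T) : e s l -> is_leaf e l ->
  (forall a b, e s a -> e a b -> ~~ is_leaf e b) -> forall u, deep s u.
Proof.
move=> esl ll nonleaf2 u a b esa au eab bs.
have eba : e b a by rewrite esym.
have [f ebf fa] := other_neighbour eba (nonleaf2 a b esa eab).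
case: (boolP [exists g, e f g && (g != b)]) => [/existsP [g /andP [efg gb]]|/existsPn none].
  by exists f, g.
exfalso; apply: (leaf_branch_contra esl ll esa _ eab bs ebf fa).
- apply/eqP => al; move/eqP: bs; apply.
  by apply: (leaf_nbr_eq ll); rewrite -al // esym.
- by move=> a' b' efa' a'b; move: (none a'); rewrite efa' a'b.
Qed.

(* If moreover s is deep away from u, every other neighbour w of u is deep
   away from u: a walk w a b that cannot be continued through a non-leaf
   neighbour of b gives the second configuration. *)
Lemma deep_beyond (s u w : T) : deep s u -> e s u -> e u w -> w != s -> deep w u.
Proof.
move=> ds esu euw ws a b ewa au eab bw.
case: (boolP [exists c, [&& e b c, c != a & ~~ is_leaf e c]]) => [|/existsPn leaves].
  case/existsP => c /and3P [ebc ca nlc].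
  have [d ecd db] := other_neighbour (c := c) (z := b) ltac:(by rewrite esym) nlc.
  by exists c, d.
exfalso; apply: (pendant_path_contra esu euw ws ewa au eab bw _ ds).
by move=> c ebc ca; move: (leaves c); rewrite ebc ca /= negbK.
Qed.

(* Two non-leaf neighbours u1, u2 of a single star support vertex s, with
   further neighbours w1, w2, form the third configuration. *)
Lemma single_star_nonleaf_nbrs (s : T) : single_star_support e s ->
  #|[set u | e s u & ~~ is_leaf e u]| <= 1.
Proof.
case/andP => /existsP [l /andP [esl ll]] /forallP unsupported.
have nonleaf2 a b : e s a -> e a b -> ~~ is_leaf e b.
  move=> esa eab; move: (unsupported a); rewrite esa /= => /existsPn /(_ b).
  by rewrite eab.
rewrite leqNgt; apply/negP => /card_gt1P [u1 [u2 []]].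
rewrite !inE => /andP [esu1 nl1] /andP [esu2 nl2] u12.
have [w1 euw1 w1s] := other_neighbour (c := u1) (z := s) ltac:(by rewrite esym) nl1.
have [w2 euw2 w2s] := other_neighbour (c := u2) (z := s) ltac:(by rewrite esym) nl2.
have deep_w u w : e s u -> e u w -> w != s -> deep w u.
  by apply: deep_beyond; apply: deep_at_root esl ll nonleaf2 u.
apply: (two_branches_contra esu1 esu2 u12 euw1 w1s euw2 w2s).
- exact: deep_w esu1 euw1 w1s.
- exact: deep_w esu2 euw2 w2s.
Qed.

End Girth15.

End Graph.

Theorem lemma5 (T : finType) (e : rel T) :
  simple_graph e ->
  connected_graph e ->
  min_degree_one e ->
  girth_ge e 15 ->
  in_class_U e ->
  forall s : T, single_star_support e s ->
  #|[set u | e s u & ~~ is_leaf e u]| <= 1.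
Proof.
move=> [esym eirr] _ _ girth15 hU s.
exact: (single_star_nonleaf_nbrs esym eirr girth15 hU).
Qed.
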